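(* Let $\mathcal C$ be a Clifford circuit with linear outcome code $\mathcal O(\mathcal C)$. For every $u\in\mathcal O(\mathcal C)^\perp$, $\overleftarrow{F(u)}=\overrightarrow{F'(u)}$, where $F'(u)=\prod_{j=1}^m\eta_{\ell_j+0.5}(S_j^{u_j})$.
   Context: A Clifford circuit on $n$ qubits is a finite sequence of operations, each a unitary Clifford gate or the measurement of a Hermitian $n$-qubit Pauli, each with a level in $\{1,2,\dots\}$; operations of equal level have disjoint supports and levels are nondecreasing; depth $\Delta$ = maximal level. In circuit order the $j$-th measurement measures $S_j$ at level $\ell_j$ ($j=1,\dots,m$); outcome $o_j=0$ for eigenvalue $+1$, $1$ for $-1$. The outcome code $\mathcal O(\mathcal C)\subseteq\mathbb Z_2^m$ is the set of outcome bit-strings occurring with nonzero probability for some input state; $\perp$ refers to $(u|v)=\sum u_iv_i\bmod2$. $\overline{\mathcal P}_N$ is the $N$-qubit Pauli group modulo phases. $U_\ell$ is the product of unitary gates of level $\ell$ (identity if none). Fault operators $F\in\overline{\mathcal P}_{n(\Delta+1)}$ act on qubits $(\ell+0.5,q)$, $0\le\ell\le\Delta$, $1\le q\le n$, with level components $F_{\ell+0.5}$; $\eta_{\ell+0.5}(P)$ is $P$ at level $\ell+0.5$ and $I$ elsewhere. Cumulant $\overrightarrow F$: start with $F$; for $\ell=1,\dots,\Delta$ replace $\overrightarrow F_{\ell+0.5}$ by $\overrightarrow F_{\ell+0.5}\cdot U_\ell\overrightarrow F_{\ell-0.5}U_\ell^{-1}$. Back-cumulant $\overleftarrow F$: start with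 $F$; for $\ell=\Delta,\dots,1$ replace $\overleftarrow F_{\ell-0.5}$ by $\overleftarrow F_{\ell-0.5}\cdot U_\ell^{-1}\overleftarrow F_{\ell+0.5}U_\ell$. $F(u)=\prod_j\eta_{\ell_j-0.5}(S_j^{u_j})$. *)

From HB Require Import structures.
From mathcomp Require Import all_boot all_order all_algebra.
Set Implicit Arguments. Unset Strict Implicit. Unset Printing Implicit Defensive.
Import Order.TTheory GRing.Theory Num.Theory.
Local Open Scope ring_scope.

(* A single-qubit Pauli mod phase is (x,z): (0,0)=I, (1,0)=X, (0,1)=Z, (1,1)=Y. *)
Definition pauli (n : nat) := {ffun 'I_n -> bool * bool}.

Definition pid (n : nat) : pauli n := [ffun _ => (false, false)].

Definition pmul (n : nat) (P Q : pauli n) : pauli n :=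
  [ffun q => ((P q).1 (+) (Q q).1, (P q).2 (+) (Q q).2)].

Definition pprod (n : nat) (s : seq (pauli n)) : pauli n := foldr (@pmul n) (pid n) s.

Definition bitof (i q : nat) : bool := odd (i %/ 2 ^ q).

(* Hermitian single-qubit Pauli matrices I, X, Z, Y; entry (row a, column b) *)
Definition letter_mx (C : numClosedFieldType) (l : bool * bool) (a b : bool) : C :=
  match l with
  | (false, false) => (a == b)%:R
  | (true, false)  => (a != b)%:R
  | (false, true)  => if a == b then (if a then -1 else 1) else 0
  | (true, true)   => if a == b then 0 else (if a then 'i else - 'i)
  end.

Definition pmx (C : numClosedFieldType) (n : nat) (P : pauli n) : 'M[C]_(2 ^ n) :=
  \matrix_(i, j) \prod_(q < n) letter_mx C (P q) (bitof i q) (bitof j q).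

Definition Xq (n : nat) (q : 'I_n) : pauli n := [ffun r => (r == q, false)].
Definition Zq (n : nat) (q : 'I_n) : pauli n := [ffun r => (false, r == q)].

Definition unitary_mx (C : numClosedFieldType) (N : nat) (U : 'M[C]_N) : bool :=
  U *m (map_mx Num.conj U)^T == 1%:M.

(* U P U^{-1} is proportional to the Pauli Q (Pauli matrices square to 1) *)
Definition conj_to (C : numClosedFieldType) (n : nat) (U : 'M[C]_(2 ^ n)) (P Q : pauli n) : bool :=
  is_scalar_mx (U *m pmx C P *m invmx U *m pmx C Q).

Definition clifford_mx (C : numClosedFieldType) (n : nat) (U : 'M[C]_(2 ^ n)) : bool :=
  unitary_mx U && [forall P : pauli n, [exists Q : pauli n, conj_to U P Q]].

Definition conjP (C : numClosedFieldType) (n : nat) (U : 'M[C]_(2 ^ n)) (P : pauli n) : pauli n :=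
  odflt P [pick Q | conj_to U P Q].

(* An operation: a unitary gate, or the measurement of the Hermitian Pauli
   (-1)^s * pmx P. *)
Inductive op (n : nat) (C : Type) :=
| Gate of 'M[C]_(2 ^ n)
| Meas of bool & pauli n.
Arguments Gate {n C}.
Arguments Meas {n C}.

(* a circuit: operations in circuit order, each with its level *)
Definition circuit (n : nat) (C : Type) := seq (op n C * nat).

Definition commutes (C : numClosedFieldType) (N : nat) (A B : 'M[C]_N) : bool :=
  A *m B == B *m A.

(* support of an operation: for a gate, the qubits on which it does not act
   as the identity (i.e. does not commute with X_q and Z_q); for a measured
   Pauli, the qubits where it is not the identity. *)
Definition op_support (C : numClosedFieldType) (n : nat) (o : op n C) : {set 'I_n} :=
  match o with
  | Gate U => [set q | ~~ (commutes U (pmx C (Xq q)) && commutes U (pmx C (Zq q)))]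
  | Meas _ P => [set q | P q != (false, false)]
  end.

Definition is_gate (n : nat) (C : Type) (o : op n C) : bool :=
  if o is Gate _ then true else false.

Definition well_formed (C : numClosedFieldType) (n : nat) (c : circuit n C) : bool :=
  [&& all (fun x => 0 < x.2)%N c,
      sorted leq (map snd c),
      all (fun x => if x.1 is Gate U then clifford_mx U else true) c &
      [forall i : 'I_(size c), forall j : 'I_(size c),
         ((i < j)%N && ((nth (Meas false (pid n), 0%N) c i).2 ==
                        (nth (Meas false (pid n), 0%N) c j).2)) ==>
         [disjoint op_support (nth (Meas false (pid n), 0%N) c i).1
                 & op_support (nth (Meas false (pid n), 0%N) c j).1]]].

Definition depth (n : nat) (C : Type) (c : circuit n C) : nat := \max_(x <- c) x.2.

Definition Ulev (C : numClosedFieldType) (n : nat) (c : circuit n C) (l : nat) : 'M[C]_(2 ^ n) :=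
  foldl (fun acc x => match x with
                      | (Gate U, l') => if l' == l then U *m acc else acc
                      | _ => acc end) 1%:M c.

Definition meas_list (n : nat) (C : Type) (c : circuit n C) : seq (bool * pauli n * nat) :=
  pmap (fun x => match x with (Meas s P, l) => Some (s, P, l) | _ => None end) c.

Definition nmeas (n : nat) (C : Type) (c : circuit n C) : nat := size (meas_list c).

Definition measP (n : nat) (C : Type) (c : circuit n C) (j : nat) : pauli n :=
  (nth (false, pid n, 0%N) (meas_list c) j).1.2.
Definition measL (n : nat) (C : Type) (c : circuit n C) (j : nat) : nat :=
  (nth (false, pid n, 0%N) (meas_list c) j).2.

(* projector onto the (-1)^b eigenspace of the measured operator (-1)^s P *)
Definition proj (C : numClosedFieldType) (n : nat) (s : bool) (P : pauli n) (b : bool) : 'M[C]_(2 ^ n) :=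
  (2%:R)^-1 *: (1%:M + ((-1) ^+ (s (+) b)) *: pmx C P).

(* unnormalized state after running the circuit with the prescribed outcomes;
   its squared norm is the probability of the outcome string (Born rule) *)
Fixpoint run (C : numClosedFieldType) (n : nat) (c : circuit n C) (o : seq bool)
  (psi : 'cV[C]_(2 ^ n)) : 'cV[C]_(2 ^ n) :=
  match c with
  | [::] => psi
  | (Gate U, _) :: c' => run c' o (U *m psi)
  | (Meas s P, _) :: c' => run c' (behead o) (proj C s P (head false o) *m psi)
  end.

Definition outcomes (n : nat) (C : Type) (c : circuit n C) := {ffun 'I_(nmeas c) -> bool}.

(* o is in the outcome code iff it occurs with nonzero probability for some
   input state *)
Definition outcome_code (C : numClosedFieldType) (n : nat) (c : circuit n C)
  (o : outcomes c) : Prop :=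
  exists psi : 'cV[C]_(2 ^ n), run c [seq o j | j <- enum 'I_(nmeas c)] psi != 0.

Definition oadd (m : nat) (u v : {ffun 'I_m -> bool}) : {ffun 'I_m -> bool} :=
  [ffun j => u j (+) v j].

Definition linear_code (m : nat) (O : {ffun 'I_m -> bool} -> Prop) : Prop :=
  O [ffun _ => false] /\ (forall u v, O u -> O v -> O (oadd u v)).

Definition bdot (m : nat) (u v : {ffun 'I_m -> bool}) : bool :=
  odd (\sum_(i < m) (u i && v i)).

Definition in_perp (m : nat) (O : {ffun 'I_m -> bool} -> Prop) (u : {ffun 'I_m -> bool}) : Prop :=
  forall v, O v -> bdot u v = false.

(* component with index l is the level l + 0.5, l = 0..depth *)
Definition fault (n : nat) (C : Type) (c : circuit n C) := {ffun 'I_(depth c).+1 -> pauli n}.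

(* F(u) = prod_j eta_{l_j - 0.5}(S_j^{u_j}) *)
Definition Fu (n : nat) (C : Type) (c : circuit n C) (u : outcomes c) : fault c :=
  [ffun i : 'I_(depth c).+1 =>
     pprod [seq measP c (val j) | j <- [seq j <- enum 'I_(nmeas c) | u j && (measL c j == i.+1)]]].

(* F'(u) = prod_j eta_{l_j + 0.5}(S_j^{u_j}) *)
Definition Fu' (n : nat) (C : Type) (c : circuit n C) (u : outcomes c) : fault c :=
  [ffun i : 'I_(depth c).+1 =>
     pprod [seq measP c (val j) | j <- [seq j <- enum 'I_(nmeas c) | u j && (measL c j == i)]]].

(* cumulant: for l = 1..depth, F_{l+0.5} := F_{l+0.5} . U_l F_{l-0.5} U_l^{-1} *)
Fixpoint cum_aux (C : numClosedFieldType) (n : nat) (c : circuit n C) (F : fault c) (l : nat)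
  : pauli n :=
  match l with
  | 0 => F ord0
  | l'.+1 => pmul (F (inord l)) (conjP (Ulev c l) (cum_aux F l'))
  end.

Definition cumulant (C : numClosedFieldType) (n : nat) (c : circuit n C) (F : fault c) : fault c :=
  [ffun i : 'I_(depth c).+1 => cum_aux F i].

(* back-cumulant: for l = depth..1, F_{l-0.5} := F_{l-0.5} . U_l^{-1} F_{l+0.5} U_l ;
   bcum_aux F k is the component of index depth - k *)
Fixpoint bcum_aux (C : numClosedFieldType) (n : nat) (c : circuit n C) (F : fault c) (k : nat)
  : pauli n :=
  match k with
  | 0 => F ord_max
  | k'.+1 => pmul (F (inord (depth c - k)))
                  (conjP (invmx (Ulev c (depth c - k'))) (bcum_aux F k'))
  end.

Definition back_cumulant (C : numClosedFieldType) (n : nat) (c : circuit n C) (F : fault c)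
  : fault c :=
  [ffun i : 'I_(depth c).+1 => bcum_aux F (depth c - i)].

From mathcomp Require Import all_boot all_order all_algebra zify ring.
Set Implicit Arguments. Unset Strict Implicit. Unset Printing Implicit Defensive.
Import Order.TTheory GRing.Theory Num.Theory.
Local Open Scope ring_scope.

(* Let T be the product of all operations of the circuit in which the j-th measured
   operator S_j is replaced by S_j^(u_j), and G the product of its gates alone.  Expanding
   the projectors shows that T is the sum, over outcome strings o, of (-1)^(u|o) times the
   Kraus operator of o; when u is orthogonal to the outcome code every o with a nonzero
   Kraus operator has (u|o) = 0, hence T = G.
   Operations of one level have disjoint supports and therefore commute, so up to a phase
   the level-l part of T is M_l U_l = U_l M_l, where M_l is the product of the Paulis
   S_j^(u_j) measured at level l.  Induction over the levels shows that, up to phases, the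
   part of T up to level l is the cumulant of F'(u) at l + 0.5 times the gates up to l,
   and that the part of T above l times the back-cumulant of F(u) at l + 0.5 is the gates
   above l.  As T = G, the two Paulis at l + 0.5 then have proportional matrices, which
   forces them to be equal modulo phases. *)

Lemma bitof0 i : bitof i 0 = odd i.
Proof. by rewrite /bitof expn0 divn1. Qed.

Lemma bitofS i q : bitof i q.+1 = bitof i./2 q.
Proof. by rewrite /bitof expnS divnMA divn2. Qed.

Lemma bitof_inj n i j : (i < 2 ^ n)%N -> (j < 2 ^ n)%N ->
  (forall q, (q < n)%N -> bitof i q = bitof j q) -> i = j.
Proof.
elim: n i j => [|n IHn] i j ltin ltjn eq_bits; first by rewrite expn0 in ltin ltjn; lia.
rewrite -[i]odd_double_half -[j]odd_double_half -!bitof0 eq_bits //; congr (_ + _.*2)%N.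
by apply: IHn => [||q ltqn]; rewrite -?bitofS ?eq_bits // -divn2 ltn_divLR // -expnSr.
Qed.

Definition bits n (i : 'I_(2 ^ n)) : {ffun 'I_n -> bool} := [ffun q : 'I_n => bitof i q].

Lemma bits_bij n : bijective (@bits n).
Proof.
apply: inj_card_bij; last by rewrite card_ffun card_bool !card_ord.
move=> i j /ffunP eq_bits; apply/val_inj/(bitof_inj (ltn_ord i) (ltn_ord j)) => q ltqn.
by have := eq_bits (Ordinal ltqn); rewrite !ffunE.
Qed.

Lemma sum_prod_bits (R : comPzSemiRingType) n (f : 'I_n -> bool -> R) :
  \sum_(i < 2 ^ n) \prod_(q < n) f q (bitof i q) = \prod_(q < n) \sum_(b : bool) f q b.
Proof.
rewrite bigA_distr_bigA (reindex (@bits n)) /=; last exact/onW_bij/bits_bij.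
by apply: eq_bigr => i _; apply: eq_bigr => q _; rewrite ffunE.
Qed.

Lemma filter_nil_all (T : Type) (a : pred T) s : all (predC a) s -> filter a s = [::].
Proof. by move=> all_Ca; apply/size0nil/eqP; rewrite size_filter eqn0Ngt -has_count -all_predC. Qed.

Section ProportionalMatrices.
Variable F : fieldType.

Definition propmx m n (A B : 'M[F]_(m, n)) := exists2 k : F, k != 0 & A = k *: B.

Lemma propmx_refl m n (A : 'M[F]_(m, n)) : propmx A A.
Proof. by exists 1; rewrite ?oner_eq0 ?scale1r. Qed.

Lemma propmx_sym m n (A B : 'M[F]_(m, n)) : propmx A B -> propmx B A.
Proof. by case=> k nz_k ->; exists k^-1; rewrite ?invr_eq0 // scalerA mulVf ?scale1r. Qed.

Lemma propmx_trans m n (A B D : 'M[F]_(m, n)) : propmx A B -> propmx B D -> propmx A D.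
Proof. by case=> k nz_k -> [l nz_l ->]; exists (k * l); rewrite ?mulf_neq0 ?scalerA. Qed.

Lemma propmxZ m n k (A : 'M[F]_(m, n)) : k != 0 -> propmx (k *: A) A.
Proof. by exists k. Qed.

Lemma propmx_mul m n p (A A' : 'M[F]_(m, n)) (B B' : 'M[F]_(n, p)) :
  propmx A A' -> propmx B B' -> propmx (A *m B) (A' *m B').
Proof.
case=> k nz_k -> [l nz_l ->]; exists (k * l); first by rewrite mulf_neq0.
by rewrite -scalemxAl -scalemxAr scalerA.
Qed.

Lemma propmx_mull m n p (A : 'M[F]_(m, n)) (B B' : 'M[F]_(n, p)) :
  propmx B B' -> propmx (A *m B) (A *m B').
Proof. exact: propmx_mul (propmx_refl A). Qed.

Lemma propmx_mulr m n p (A A' : 'M[F]_(m, n)) (B : 'M[F]_(n, p)) :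
  propmx A A' -> propmx (A *m B) (A' *m B).
Proof. by move/propmx_mul; apply; apply: propmx_refl. Qed.

Lemma propmx_unitl n p (U : 'M[F]_n) (A B : 'M[F]_(n, p)) :
  U \in unitmx -> propmx (U *m A) (U *m B) -> propmx A B.
Proof. by move=> uU /(propmx_mull (invmx U)); rewrite !mulKmx. Qed.

Lemma propmx_unitr m n (U : 'M[F]_n) (A B : 'M[F]_(m, n)) :
  U \in unitmx -> propmx (A *m U) (B *m U) -> propmx A B.
Proof. by move=> uU /(propmx_mulr (invmx U)); rewrite !mulmxK. Qed.

End ProportionalMatrices.

Section PauliMatrices.
Variables (C : numClosedFieldType) (n : nat).
Implicit Types (P Q R : pauli n) (l : bool * bool).
Local Notation M := 'M[C]_(2 ^ n).

Definition letter_phase l1 l2 : C :=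
  match l1, l2 with
  | (true, false), (false, true) | (true, true), (true, false)
  | (false, true), (true, true) => - 'i
  | (false, true), (true, false) | (true, false), (true, true)
  | (true, true), (false, true) => 'i
  | _, _ => 1
  end.

Lemma letter_mx_mul l1 l2 a c :
  \sum_(b : bool) letter_mx C l1 a b * letter_mx C l2 b c
  = letter_phase l1 l2 * letter_mx C (l1.1 (+) l2.1, l1.2 (+) l2.2) a c.
Proof.
have sqrCi' : 'i * 'i = -1 :> C by rewrite -expr2 sqrCi.
rewrite big_bool; case: l1 => [[] []]; case: l2 => [[] []]; case: a; case: c;
by rewrite /= ?(mul0r, mulr0, add0r, addr0, mul1r, mulr1, mulrN, mulNr, opprK, sqrCi').
Qed.

Lemma letter_phase_neq0 l1 l2 : letter_phase l1 l2 != 0.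
Proof.
have nz_i : 'i != 0 :> C by rewrite -normr_eq0 normCi oner_eq0.
by case: l1 => [[] []]; case: l2 => [[] []]; rewrite /= ?oppr_eq0 ?oner_eq0.
Qed.

Definition pauli_phase P Q : C := \prod_(q < n) letter_phase (P q) (Q q).

Lemma pauli_phase_neq0 P Q : pauli_phase P Q != 0.
Proof. by apply/prodf_neq0 => q _; apply: letter_phase_neq0. Qed.

Lemma pmx_mul P Q : pmx C P *m pmx C Q = pauli_phase P Q *: pmx C (pmul P Q).
Proof.
apply/matrixP => i k; rewrite !mxE.
under eq_bigr do rewrite !mxE -big_split /=.
rewrite (sum_prod_bits (fun q b => letter_mx C (P q) _ b * letter_mx C (Q q) b _)).
by rewrite -big_split; apply: eq_bigr => q _; rewrite letter_mx_mul ffunE.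
Qed.

Lemma propmx_pmx_mul P Q : propmx (pmx C (pmul P Q)) (pmx C P *m pmx C Q).
Proof. by rewrite pmx_mul; apply/propmx_sym/propmxZ/pauli_phase_neq0. Qed.

Lemma propmx_pmx_comm P Q : propmx (pmx C P *m pmx C Q) (pmx C Q *m pmx C P).
Proof.
rewrite !pmx_mul (_ : pmul Q P = pmul P Q); last first.
  by apply/ffunP => q; rewrite !ffunE addbC [_.2 (+) _]addbC.
exact: propmx_trans (propmxZ _ (pauli_phase_neq0 _ _))
                    (propmx_sym (propmxZ _ (pauli_phase_neq0 _ _))).
Qed.

Lemma pmx_pid : pmx C (pid n) = 1%:M.
Proof.
apply/matrixP => i j; rewrite !mxE.
have [<-|neq_ij] := eqVneq i j; first by apply: big1 => q _; rewrite ffunE /= eqxx.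
have [q neq_q] : exists q : 'I_n, bitof i q != bitof j q.
  apply/existsP; apply: contraR neq_ij => /existsPn same_bits.
  apply/eqP/(bij_inj (@bits_bij n))/ffunP => q.
  by rewrite !ffunE; apply/eqP/negPn/same_bits.
by apply/eqP/prodf_eq0; exists q => //; rewrite ffunE /= (negPf neq_q).
Qed.

Lemma pmx_sq P : pmx C P *m pmx C P = 1%:M.
Proof.
rewrite pmx_mul (_ : pmul P P = pid n) ?pmx_pid; last by apply/ffunP => q; rewrite !ffunE !addbb.
by rewrite (_ : pauli_phase P P = 1) ?scale1r //; apply: big1 => q _; case: (P q) => [[] []].
Qed.

Lemma pmx_unit P : pmx C P \in unitmx.
Proof. by case: (mulmx1_unit (pmx_sq P)). Qed.

Lemma scalar_mx1_neq0 : (1%:M : M) != 0.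
Proof.
apply: contraTneq isT => /(congr1 mxtrace)/eqP.
by rewrite mxtrace1 mxtrace0 pnatr_eq0 expn_eq0.
Qed.

Lemma mxtrace_pmx P : \tr (pmx C P) = \prod_(q < n) \sum_(b : bool) letter_mx C (P q) b b.
Proof.
rewrite -(sum_prod_bits (fun q b => letter_mx C (P q) b b)).
by apply: eq_bigr => i _; rewrite mxE.
Qed.

(* Only the identity letter has nonzero trace, so a scalar Pauli matrix is the identity. *)
Lemma pmx_scalar_pid R a : a != 0 -> pmx C R = a%:M -> R = pid n.
Proof.
move=> nz_a eq_R; apply/ffunP => q; rewrite ffunE; apply: contraTeq isT => nid_q.
have tr0 : \prod_(q < n) \sum_(b : bool) letter_mx C (R q) b b = 0.
  apply/eqP/prodf_eq0; exists q => //; rewrite big_bool.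
  by move: nid_q; case: (R q) => [[] []]; rewrite /= ?addr0 ?addNr.
move: (congr1 mxtrace eq_R); rewrite mxtrace_pmx mxtrace_scalar tr0 => /esym/eqP.
by rewrite mulrn_eq0 (negPf nz_a) expn_eq0.
Qed.

Lemma pmx_inj P Q : propmx (pmx C P) (pmx C Q) -> P = Q.
Proof.
case=> k nz_k eq_PQ.
have eq_mul : pauli_phase P Q *: pmx C (pmul P Q) = k%:M.
  by rewrite -pmx_mul eq_PQ -scalemxAl pmx_sq scalemx1.
have /pmx_scalar_pid : pmx C (pmul P Q) = (k / pauli_phase P Q)%:M.
  by rewrite -[LHS](scalerK (pauli_phase_neq0 P Q)) eq_mul scale_scalar_mx mulrC.
rewrite mulf_neq0 ?invr_eq0 ?pauli_phase_neq0 // => /(_ isT) /ffunP PQ_pid.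
apply/ffunP => q; move: (PQ_pid q); rewrite !ffunE.
by case: (P q) => [[] []]; case: (Q q) => [[] []].
Qed.

End PauliMatrices.

Section Clifford.
Variables (C : numClosedFieldType) (n : nat).
Implicit Types (P Q : pauli n) (U V : 'M[C]_(2 ^ n)).

Definition clifford U :=
  U \in unitmx /\ forall P, exists Q, propmx (U *m pmx C P) (pmx C Q *m U).

Lemma conj_toP U P Q : U \in unitmx ->
  reflect (propmx (U *m pmx C P) (pmx C Q *m U)) (conj_to U P Q).
Proof.
move=> uU; apply: (iffP is_scalar_mxP) => [[a eq_a] | [k nz_k eq_k]]; last first.
  by exists k; rewrite eq_k -scalemxAl mulmxK // -scalemxAl pmx_sq scalemx1.
have eq_UP : U *m pmx C P = a *: (pmx C Q *m U).
  by rewrite scalemxAl -mul_scalar_mx -eq_a -(mulmxA _ (pmx C Q) (pmx C Q)) pmx_sq mulmx1 mulmxKV.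
exists a => //; apply: contra_neq (scalar_mx1_neq0 C n) => a0.
have : U *m pmx C P *m pmx C P = 0 by rewrite eq_UP a0 scale0r mul0mx.
by rewrite -mulmxA pmx_sq mulmx1 -(mulVmx uU) => ->; rewrite mulmx0.
Qed.

Lemma conjP_propmx U P : clifford U -> propmx (U *m pmx C P) (pmx C (conjP U P) *m U).
Proof.
case=> uU conjU; rewrite /conjP; case: pickP => [Q /(conj_toP _ _ uU) // | no_Q].
by have [Q /(conj_toP _ _ uU)] := conjU P; rewrite no_Q.
Qed.

Lemma clifford_mx_clifford U : clifford_mx U -> clifford U.
Proof.
case/andP => /eqP/mulmx1_unit[uU _] /forallP conjU; split=> // P.
by have /existsP[Q /(conj_toP _ _ uU)] := conjU P; exists Q.
Qed.

Lemma clifford1 : clifford 1%:M.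
Proof. by split=> [|P]; [exact: unitmx1 | exists P; rewrite mul1mx mulmx1; apply: propmx_refl]. Qed.

Lemma cliffordM U V : clifford U -> clifford V -> clifford (U *m V).
Proof.
move=> [uU conjU] [uV conjV]; split=> [|P]; first by rewrite unitmx_mul uU.
have [Q VP] := conjV P; have [R UQ] := conjU Q; exists R.
rewrite -mulmxA; apply: propmx_trans (propmx_mull U VP) _.
by rewrite !mulmxA; apply: propmx_mulr.
Qed.

(* Conjugation by a Clifford matrix is injective on Paulis, hence onto. *)
Lemma cliffordV U : clifford U -> clifford (invmx U).
Proof.
move=> cU; have [uU _] := cU; split=> [|P]; first by rewrite unitmx_inv.
have conj_inj : injective (conjP U).
  move=> Q1 Q2 eqQ; apply: pmx_inj; apply: (propmx_unitl uU).
  apply: propmx_trans (conjP_propmx Q1 cU) _; rewrite eqQ.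
  exact/propmx_sym/conjP_propmx.
have /codomP[Q ->] := injF_onto conj_inj P; exists Q.
have := conjP_propmx Q cU => /(propmx_mull (invmx U)) /(propmx_mulr (invmx U)).
by rewrite mulKmx // -mulmxA mulmxK // => /propmx_sym.
Qed.

Lemma propmx_conjPV U P : clifford U ->
  propmx (U *m pmx C (conjP (invmx U) P)) (pmx C P *m U).
Proof.
move=> cU; have [uU _] := cU.
have := conjP_propmx P (cliffordV cU) => /(propmx_mull U) /(propmx_mulr U).
by rewrite mulmxA mulmxV // mul1mx -!mulmxA mulVmx // mulmx1 => /propmx_sym.
Qed.

End Clifford.

Section Commutation.
Variables (C : numClosedFieldType) (n : nat).
Implicit Types (P Q : pauli n) (A : 'M[C]_(2 ^ n)).

Lemma comm_mx_pmul A P Q :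
  comm_mx A (pmx C P) -> comm_mx A (pmx C Q) -> comm_mx A (pmx C (pmul P Q)).
Proof.
move=> AP AQ; have /(canLR (scalerK (pauli_phase_neq0 C P Q))) <- := pmx_mul C P Q.
by rewrite /comm_mx -scalemxAr -scalemxAl; congr (_ *: _); apply: comm_mxM.
Qed.

Lemma comm_mx_pprod A s : all (fun P => comm_mxb A (pmx C P)) s -> comm_mx A (pmx C (pprod s)).
Proof.
elim: s => [_|P s IHs] /=; first by rewrite pmx_pid; apply: comm_mx1.
by case/andP => /comm_mxP AP /IHs; apply: comm_mx_pmul.
Qed.

Definition pauli_at (q : 'I_n) (l : bool * bool) : pauli n :=
  pmul (if l.1 then Xq q else pid n) (if l.2 then Zq q else pid n).

Lemma pprod_pauli_at P (s : seq 'I_n) r : uniq s ->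
  pprod [seq pauli_at q (P q) | q <- s] r = if r \in s then P r else (false, false).
Proof.
elim: s => [_|q s IHs /andP[q_notin_s uniq_s]] /=; first by rewrite ffunE.
rewrite !ffunE IHs // inE.
have [->|neq_rq] := eqVneq r q.
  by rewrite (negPf q_notin_s) /=; case: (P q) => [[] []]; rewrite !ffunE ?eqxx.
case: (P q) => [[] []]; rewrite !ffunE ?(negPf neq_rq) /=;
  by case: (r \in s); case: (P r) => [[] []].
Qed.

Lemma pauli_decomp P : P = pprod [seq pauli_at q (P q) | q <- enum 'I_n].
Proof. by apply/ffunP => r; rewrite pprod_pauli_at ?enum_uniq ?mem_enum. Qed.

Lemma comm_mx_pmx_support A P :
  (forall q, P q != (false, false) -> comm_mx A (pmx C (Xq q)) /\ comm_mx A (pmx C (Zq q))) ->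
  comm_mx A (pmx C P).
Proof.
move=> AXZ; rewrite [P]pauli_decomp; apply: comm_mx_pprod; apply/allP => _ /mapP[q _ ->].
have AI : comm_mx A (pmx C (pid n)) by rewrite pmx_pid; apply: comm_mx1.
apply/comm_mxP/comm_mx_pmul.
  by case: ifP => // Pq1; case: (AXZ q) => //; apply: contraTneq Pq1 => ->.
by case: ifP => // Pq2; case: (AXZ q) => //; apply: contraTneq Pq2 => ->.
Qed.

Lemma comm_mx_disjoint_support U s P :
  [disjoint op_support (Gate U) & op_support (Meas s P : op n C)] -> comm_mx U (pmx C P).
Proof.
move=> disj; apply: comm_mx_pmx_support => q Pq.
have /(disjointFl disj) : q \in op_support (Meas s P : op n C) by rewrite inE.
by rewrite inE => /negbFE /andP[/comm_mxP UX /comm_mxP UZ].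
Qed.

End Commutation.

Section CircuitMatrices.
Variables (C : numClosedFieldType) (n : nat).
Local Notation M := 'M[C]_(2 ^ n).
Implicit Types (b c : circuit n C) (x : op n C * nat).

Definition op_mx (x : op n C) : M :=
  match x with Gate U => U | Meas s P => (-1) ^+ s *: pmx C P end.

Definition gate_mx (x : op n C) : M := if x is Gate U then U else 1%:M.

(* Operations later in the circuit act on the left. *)
Definition circ_mx (f : op n C -> M) c : M := foldr (fun x A => A *m f x.1) 1%:M c.

Lemma circ_mx_cat f c1 c2 : circ_mx f (c1 ++ c2) = circ_mx f c2 *m circ_mx f c1.
Proof. by elim: c1 => [|x c1 IHc1] /=; rewrite ?mulmx1 // IHc1 mulmxA. Qed.

Definition gate_clifford x := if x.1 is Gate U then clifford_mx U else true.

Lemma clifford_circ_gates b : all gate_clifford b -> clifford (circ_mx gate_mx b).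
Proof.
elim: b => [_|[[U|s P] l] b IHb] /=; first exact: clifford1.
  by case/andP => /clifford_mx_clifford cU /IHb cG; apply: cliffordM.
by rewrite mulmx1.
Qed.

Lemma circ_mx_op_unit b : all gate_clifford b -> circ_mx op_mx b \in unitmx.
Proof.
elim: b => [_|[[U|s P] l] b IHb] /=; first exact: unitmx1.
  by case/andP => /clifford_mx_clifford[uU _] /IHb uO; rewrite unitmx_mul uO.
by move/IHb => uO; rewrite unitmx_mul uO unitmxZ ?pmx_unit ?unitrX ?unitrN1.
Qed.

End CircuitMatrices.

Arguments op_mx {C n}.
Arguments gate_mx {C n}.
Arguments gate_clifford {C n}.

Section OutcomeCode.
Variables (C : numClosedFieldType) (n : nat).
Local Notation M := 'M[C]_(2 ^ n).
Implicit Types (c : circuit n C) (u o : bitseq).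

Fixpoint kraus_mx c o : M :=
  match c with
  | [::] => 1%:M
  | (Gate U, _) :: c' => kraus_mx c' o *m U
  | (Meas s P, _) :: c' => kraus_mx c' (behead o) *m proj C s P (head false o)
  end.

Lemma run_kraus_mx c o psi : run c o psi = kraus_mx c o *m psi.
Proof. by elim: c o psi => [|[[U|s P] l] c IHc] o psi /=; rewrite ?mul1mx // IHc mulmxA. Qed.

(* The j-th measurement, of S_j, becomes the operator S_j^(u_j). *)
Fixpoint meas_power c u : circuit n C :=
  match c with
  | [::] => [::]
  | (Gate U, l) :: c' => (Gate U, l) :: meas_power c' u
  | (Meas s P, l) :: c' =>
      (Meas (s && head false u) (if head false u then P else pid n), l) :: meas_power c' (behead u)
  end.

Fixpoint bitseqs k : seq bitseq :=
  if k is k'.+1 then [seq false :: o | o <- bitseqs k'] ++ [seq true :: o | o <- bitseqs k']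
  else [:: [::]].

Lemma size_bitseqs k o : o \in bitseqs k -> size o = k.
Proof.
elim: k o => [|k IHk] o /=; first by rewrite inE => /eqP ->.
by rewrite mem_cat => /orP[] /mapP[o' /IHk <- ->].
Qed.

Fixpoint dotb u o : bool :=
  if o is b :: o' then (head false u && b) (+) dotb (behead u) o' else false.

Lemma dotb0 o : dotb [::] o = false.
Proof. by elim: o. Qed.

Lemma dotbE m u o : size u = m -> size o = m ->
  dotb u o = odd (\sum_(i < m) (nth false u i && nth false o i)).
Proof.
elim: m u o => [|m IHm] [|a u] [|b o] //=; first by rewrite big_ord0.
by move=> [size_u] [size_o]; rewrite big_ord_recl oddD oddb IHm.
Qed.

Lemma proj_signed_sum s P (b : bool) :
  proj C s P false + (-1) ^+ b *: proj C s P true = op_mx (Meas (s && b) (if b then P else pid n)).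
Proof.
have nz2 : (2 : C) != 0 by rewrite pnatr_eq0.
by apply/matrixP => i j; case: s; case: b; rewrite /proj /= ?pmx_pid !mxE /=; field.
Qed.

Lemma sum_signed_kraus_mx c u :
  \sum_(o <- bitseqs (nmeas c)) (-1) ^+ dotb u o *: kraus_mx c o = circ_mx op_mx (meas_power c u).
Proof.
elim: c u => [|[[U|s P] l] c IHc] u /=; first by rewrite big_seq1 scale1r.
  by rewrite -IHc mulmx_suml; apply: eq_bigr => o _; rewrite scalemxAl.
rewrite big_cat !big_map /=.
have sum_b b : \sum_(o <- bitseqs (nmeas c))
    (-1) ^+ ((head false u && b) (+) dotb (behead u) o) *: (kraus_mx c o *m proj C s P b)
  = (-1) ^+ (head false u && b) *: (circ_mx op_mx (meas_power c (behead u)) *m proj C s P b).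
  rewrite -IHc mulmx_suml scaler_sumr; apply: eq_bigr => o _.
  by rewrite signr_addb -scalerA scalemxAl.
by rewrite !sum_b andbF andbT scale1r scalemxAr -mulmxDr proj_signed_sum.
Qed.

Lemma meas_power_nil c : circ_mx op_mx (meas_power c [::]) = circ_mx gate_mx c.
Proof. by elim: c => [|[[U|s P] l] c IHc] //=; rewrite IHc // andbF scale1r pmx_pid. Qed.

Lemma mx_neq0_col m (A : 'M[C]_(m, 2 ^ n)) : A != 0 -> exists j, A *m delta_mx j (0 : 'I_1) != 0.
Proof.
move=> nzA; apply/existsP; apply: contraR nzA => /existsPn col0; apply/eqP/matrixP => i j.
by move/negbNE: (col0 j); rewrite -colE => /eqP/matrixP/(_ i 0); rewrite !mxE.
Qed.

Lemma circ_mx_perp c (u : outcomes c) : in_perp (@outcome_code C n c) u ->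
  circ_mx op_mx (meas_power c [seq u j | j <- enum 'I_(nmeas c)]) = circ_mx gate_mx c.
Proof.
move=> perp_u; rewrite -sum_signed_kraus_mx -meas_power_nil -sum_signed_kraus_mx.
apply: eq_big_seq => o /size_bitseqs size_o; rewrite dotb0.
have [->|nzK] := eqVneq (kraus_mx c o) 0; first by rewrite !scaler0.
pose v : outcomes c := [ffun j : 'I_(nmeas c) => nth false o j].
have v_code : outcome_code v.
  have [k nzKk] := mx_neq0_col nzK; exists (delta_mx k 0); rewrite run_kraus_mx.
  suff -> : [seq v j | j <- enum 'I_(nmeas c)] = o by [].
  rewrite -[RHS](mkseq_nth false) size_o /mkseq -val_enum_ord -map_comp.
  by apply: eq_map => j; rewrite /= ffunE.
suff -> : dotb [seq u j | j <- enum 'I_(nmeas c)] o = false by [].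
rewrite (@dotbE (nmeas c)) //; last by rewrite size_map size_enum_ord.
transitivity (bdot u v); last exact: perp_u v v_code.
congr odd; apply: eq_bigr => j _.
by rewrite (nth_map j) ?size_enum_ord // nth_ord_enum ffunE.
Qed.

End OutcomeCode.

Section DisjointBlocks.
Variables (C : numClosedFieldType) (n : nat).
Implicit Types (b : circuit n C) (x y : op n C * nat).

Definition meas_pauli b : pauli n := pprod [seq m.1.2 | m <- meas_list b].

Definition disjoint_ops x y := [disjoint op_support x.1 & op_support y.1].
Definition same_level_disjoint x y := (x.2 == y.2) ==> disjoint_ops x y.

Lemma comm_mx_meas_pauli_disjoint U l b :
  all (disjoint_ops (Gate U, l)) b -> comm_mx U (pmx C (meas_pauli b)).
Proof.
elim: b => [_|[[V|s P] l'] b IHb] /=; first by rewrite pmx_pid; apply: comm_mx1.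
  by case/andP => _ /IHb.
by case/andP => /comm_mx_disjoint_support UP /IHb; apply: comm_mx_pmul.
Qed.

Lemma comm_mx_gates_disjoint s P l b :
  all (disjoint_ops (Meas s P, l)) b -> comm_mx (pmx C P) (circ_mx gate_mx b).
Proof.
elim: b => [_|[[U|s' Q] l'] b IHb] /=; first exact: comm_mx1.
  case/andP; rewrite /disjoint_ops disjoint_sym => /comm_mx_disjoint_support UP /IHb PG.
  by apply: comm_mxM => //; apply: comm_mx_sym.
by case/andP => _ /IHb; rewrite mulmx1.
Qed.

Lemma pairwise_disjoint_comm b :
  pairwise disjoint_ops b -> comm_mx (circ_mx gate_mx b) (pmx C (meas_pauli b)).
Proof.
elim: b => [|[[U|s P] l] b IHb] /=; first by rewrite pmx_pid => _; apply: comm_mx1.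
  case/andP => /comm_mx_meas_pauli_disjoint UM /IHb GM.
  by apply/comm_mx_sym/comm_mxM; apply: comm_mx_sym.
case/andP => /comm_mx_gates_disjoint PG /IHb GM.
by rewrite mulmx1; apply: comm_mx_pmul => //; apply: comm_mx_sym.
Qed.

Lemma pairwise_disjoint_circ_mx b : pairwise disjoint_ops b ->
  propmx (circ_mx op_mx b) (pmx C (meas_pauli b) *m circ_mx gate_mx b).
Proof.
elim: b => [|[[U|s P] l] b IHb] /=; first by rewrite pmx_pid mul1mx => _; apply: propmx_refl.
  by case/andP => _ /IHb /(propmx_mulr U); rewrite mulmxA.
case/andP => /comm_mx_gates_disjoint PG /IHb IHb'.
have nz_sign : (-1) ^+ s != 0 :> C by rewrite signr_eq0.
rewrite mulmx1; apply: propmx_trans (propmx_mul IHb' (propmxZ _ nz_sign)) _.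
rewrite -mulmxA -PG mulmxA; apply: propmx_mulr.
exact: propmx_trans (propmx_pmx_comm _ _ _) (propmx_sym (propmx_pmx_mul _ _ _)).
Qed.

End DisjointBlocks.

Arguments disjoint_ops {C n}.
Arguments same_level_disjoint {C n}.

Section Levels.
Variables (C : numClosedFieldType) (n : nat).
Implicit Types (d : circuit n C).

Definition level_of d (t : nat) : circuit n C := [seq x : op n C * nat <- d | x.2 == t].
Definition upto d (t : nat) : circuit n C := [seq x : op n C * nat <- d | (x.2 <= t)%N].
Definition above d (t : nat) : circuit n C := [seq x : op n C * nat <- d | (t < x.2)%N].

Definition level_le : rel (op n C * nat) := relpre snd leq.

Lemma level_le_trans : transitive level_le.
Proof. by move=> y x z; apply: leq_trans. Qed.

Lemma cat_upto_above d t : sorted level_le d -> upto d t ++ above d t = d.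
Proof.
elim: d => [|x d IHd] //= sorted_xd; have x_le := order_path_min level_le_trans sorted_xd.
rewrite /upto /above /=; case: leqP => [le_xt|lt_tx] /=.
  by rewrite IHd ?(path_sorted sorted_xd).
rewrite filter_nil_all; last first.
  by apply: sub_all x_le => y /= le_xy; rewrite -ltnNge (leq_trans lt_tx le_xy).
by congr (_ :: _); apply/all_filterP; apply: sub_all x_le => y; apply: leq_trans.
Qed.

Lemma circ_mx_split f d t : sorted level_le d ->
  circ_mx f d = circ_mx f (above d t) *m circ_mx f (upto d t).
Proof. by move=> sorted_d; rewrite -{1}(cat_upto_above t sorted_d) circ_mx_cat. Qed.

Lemma circ_mx_uptoS f d t : sorted level_le d ->
  circ_mx f (upto d t.+1) = circ_mx f (level_of d t.+1) *m circ_mx f (upto d t).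
Proof.
move=> sorted_d; rewrite (circ_mx_split f t (sorted_filter level_le_trans _ sorted_d)).
by rewrite /above /upto /level_of -!filter_predI; congr (circ_mx f _ *m circ_mx f _);
  apply: eq_filter => x /=; lia.
Qed.

Lemma circ_mx_aboveS f d t : sorted level_le d ->
  circ_mx f (above d t) = circ_mx f (above d t.+1) *m circ_mx f (level_of d t.+1).
Proof.
move=> sorted_d; rewrite (circ_mx_split f t.+1 (sorted_filter level_le_trans _ sorted_d)).
by rewrite /above /upto /level_of -!filter_predI; congr (circ_mx f _ *m circ_mx f _);
  apply: eq_filter => x /=; lia.
Qed.

End Levels.

Arguments level_le {C n}.

Section Cumulants.
Variables (C : numClosedFieldType) (n : nat) (c d : circuit n C).
Local Notation gates b := (circ_mx gate_mx b).
Local Notation ops b := (circ_mx op_mx b).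

Hypothesis d_sorted : sorted level_le d.
Hypothesis d_pos : all (fun x => 0 < x.2)%N d.
Hypothesis d_le_depth : all (fun x => x.2 <= depth c)%N d.
Hypothesis d_clifford : all gate_clifford d.
Hypothesis d_disjoint : pairwise same_level_disjoint d.
Hypothesis Ulev_d : forall t, Ulev c t = gates (level_of d t).

Lemma filter_gate_clifford (p : pred (op n C * nat)) : all gate_clifford [seq x <- d | p x].
Proof. by rewrite all_filter; apply: sub_all d_clifford => x gx; apply/implyP. Qed.

Lemma level_clifford t : clifford (gates (level_of d t)).
Proof. exact/clifford_circ_gates/filter_gate_clifford. Qed.

Lemma level_disjoint t : pairwise disjoint_ops (level_of d t).
Proof.
apply: (sub_in_pairwise (P := fun x => x.2 == t)); last exact: pairwise_filter _ d_disjoint.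
  by move=> x y; rewrite !unfold_in /same_level_disjoint /= => /eqP -> /eqP ->; rewrite eqxx.
exact: filter_all.
Qed.

Lemma level_ops_propmx t :
  propmx (ops (level_of d t)) (pmx C (meas_pauli (level_of d t)) *m gates (level_of d t)).
Proof. exact/pairwise_disjoint_circ_mx/level_disjoint. Qed.

Lemma level_gates_comm t : comm_mx (gates (level_of d t)) (pmx C (meas_pauli (level_of d t))).
Proof. exact/pairwise_disjoint_comm/level_disjoint. Qed.

Lemma cumulant_propmx (F : fault c) :
  (forall i : 'I_(depth c).+1, F i = meas_pauli (level_of d i)) ->
  forall t, (t <= depth c)%N -> propmx (pmx C (cum_aux F t) *m gates (upto d t)) (ops (upto d t)).
Proof.
move=> F_lev; elim=> [|t IHt] le_t /=.
  have upto0 : upto d 0 = [::].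
    by apply: filter_nil_all; apply: sub_all d_pos => x /=; rewrite -ltnNge.
  have level0 : level_of d 0 = [::].
    by apply: filter_nil_all; apply: sub_all d_pos => x /=; rewrite lt0n.
  by rewrite F_lev level0 upto0 /= pmx_pid mul1mx; apply: propmx_refl.
rewrite F_lev inordK // Ulev_d !circ_mx_uptoS //.
set G := gates _; set M := meas_pauli _; set K := cum_aux F t.
apply: propmx_trans (propmx_mulr _ (propmx_pmx_mul _ _ _)) _.
rewrite -mulmxA (mulmxA (pmx C _) G).
have KG := propmx_sym (conjP_propmx K (level_clifford t.+1)).
apply: propmx_trans (propmx_mull _ (propmx_mulr _ KG)) _.
rewrite -mulmxA mulmxA; apply: propmx_mul; last exact: IHt (ltnW le_t).
exact/propmx_sym/level_ops_propmx.
Qed.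

Lemma back_cumulant_propmx (F : fault c) :
  (forall i : 'I_(depth c).+1, F i = meas_pauli (level_of d i.+1)) ->
  forall k, (k <= depth c)%N ->
  propmx (ops (above d (depth c - k)) *m pmx C (bcum_aux F k)) (gates (above d (depth c - k))).
Proof.
move=> F_lev; elim=> [|k IHk] le_k /=.
  have above_depth : above d (depth c - 0) = [::].
    by apply: filter_nil_all; apply: sub_all d_le_depth => x /=; rewrite subn0 -leqNgt.
  have level_depth : level_of d (depth c).+1 = [::].
    by apply: filter_nil_all; apply: sub_all d_le_depth => x /=; lia.
  by rewrite F_lev level_depth above_depth /= pmx_pid mulmx1; apply: propmx_refl.
have [t def_t] : exists t, (depth c - k = t.+1)%N by exists (depth c - k.+1)%N; lia.
have -> : (depth c - k.+1 = t)%N by lia.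
have {}IHk := IHk (ltnW le_k); rewrite def_t in IHk *.
rewrite F_lev inordK; last by rewrite ltnS; lia.
rewrite Ulev_d (circ_mx_aboveS _ t) // (circ_mx_aboveS _ t) //.
set Td := ops _; set G := gates _; set M := meas_pauli _; set B := bcum_aux F k.
apply: propmx_trans (propmx_mul (propmx_mull Td (level_ops_propmx t.+1)) (propmx_pmx_mul _ _ _)) _.
rewrite -level_gates_comm.
have -> : Td *m (G *m pmx C M) *m (pmx C M *m pmx C (conjP (invmx G) B)) =
          Td *m (G *m pmx C (conjP (invmx G) B)).
  by rewrite !mulmxA -(mulmxA _ (pmx C M) (pmx C M)) pmx_sq mulmx1.
apply: propmx_trans (propmx_mull Td (propmx_conjPV B (level_clifford t.+1))) _.
by rewrite mulmxA; apply: propmx_mulr.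
Qed.

Lemma back_cumulant_eq_cumulant (F F' : fault c) :
  (forall i : 'I_(depth c).+1, F i = meas_pauli (level_of d i.+1)) ->
  (forall i : 'I_(depth c).+1, F' i = meas_pauli (level_of d i)) ->
  ops d = gates d -> back_cumulant F = cumulant F'.
Proof.
move=> F_lev F'_lev ops_gates; apply/ffunP => i; rewrite !ffunE.
have le_i : (i <= depth c)%N by rewrite -ltnS.
have := back_cumulant_propmx F_lev (leq_subr i (depth c)); rewrite subKn // => bcum.
have cum := cumulant_propmx F'_lev le_i.
have u_above : ops (above d i) \in unitmx := circ_mx_op_unit (filter_gate_clifford _).
have u_upto : gates (upto d i) \in unitmx := (clifford_circ_gates (filter_gate_clifford _)).1.
apply: (@pmx_inj C); apply: (propmx_unitl u_above); apply: (propmx_unitr u_upto).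
apply: propmx_trans (propmx_mulr _ bcum) _.
rewrite -circ_mx_split // -ops_gates (circ_mx_split _ i) // -mulmxA.
exact/propmx_mull/propmx_sym.
Qed.

End Cumulants.

Section MeasPower.
Variables (C : numClosedFieldType) (n : nat).
Implicit Types (c : circuit n C) (u : bitseq) (x y : op n C * nat).

Lemma meas_power_levels c u : [seq x.2 | x <- meas_power c u] = [seq x.2 | x <- c].
Proof. by elim: c u => [|[[U|s P] l] c IHc] u //=; rewrite IHc. Qed.

Lemma gates_meas_power c u : circ_mx gate_mx (meas_power c u) = circ_mx gate_mx c.
Proof. by elim: c u => [|[[U|s P] l] c IHc] u //=; rewrite IHc. Qed.

Lemma gates_meas_power_level c u t :
  circ_mx gate_mx (level_of (meas_power c u) t) = circ_mx gate_mx (level_of c t).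
Proof.
by rewrite /level_of; elim: c u => [|[[U|s P] l] c IHc] u //=; case: (l == t); rewrite /= IHc.
Qed.

Lemma meas_power_all (r : pred (op n C * nat)) c u :
  (forall s P b l, r (Meas s P, l) -> r (Meas (s && b) (if b then P else pid n), l)) ->
  all r c -> all r (meas_power c u).
Proof.
move=> rW; elim: c u => [|[[U|s P] l] c IHc] u //= /andP[rx /IHc ->]; rewrite ?rx ?rW //.
Qed.

Lemma op_support_meas_power s P (b : bool) :
  op_support (Meas (s && b) (if b then P else pid n) : op n C)
  \subset op_support (Meas s P : op n C).
Proof.
case: b; first exact: subxx.
by apply/subsetP => q; rewrite !inE ffunE eqxx.
Qed.

Lemma same_level_disjointW x x' y y' : x'.2 = x.2 -> y'.2 = y.2 ->
  op_support x'.1 \subset op_support x.1 -> op_support y'.1 \subset op_support y.1 ->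
  same_level_disjoint x y -> same_level_disjoint x' y'.
Proof.
rewrite /same_level_disjoint /disjoint_ops => -> -> sub_x sub_y /implyP disj_xy.
by apply/implyP => /disj_xy /(disjointWl sub_x) /(disjointWr sub_y).
Qed.

Lemma meas_power_disjoint c u :
  pairwise same_level_disjoint c -> pairwise same_level_disjoint (meas_power c u).
Proof.
elim: c u => [|[[U|s P] l] c IHc] u //= /andP[disj_x /IHc ->];
  rewrite andbT; apply: meas_power_all => [s' P' b l'|].
- by apply: same_level_disjointW => //; apply: op_support_meas_power.
- exact: disj_x.
- by apply: same_level_disjointW => //; apply: op_support_meas_power.
- apply: sub_all disj_x => y; apply: same_level_disjointW => //; exact: op_support_meas_power.
Qed.

Lemma meas_pauli_meas_power c u t :
  meas_pauli (level_of (meas_power c u) t)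
  = pprod [seq m.1.2 | m <- mask u (meas_list c) & m.2 == t].
Proof.
have pmul1P (P : pauli n) : pmul (pid n) P = P by apply/ffunP => q; rewrite !ffunE; case: (P q).
rewrite /meas_pauli; elim: c u => [|[[U|s P] l] c IHc] u; first by case: u.
  by rewrite /level_of /=; case: (l == t); rewrite /= -/(level_of _ t) IHc.
case: u => [|b u]; rewrite /level_of /=.
  by case: (l == t); rewrite /= -/(level_of _ t) IHc /= ?pmul1P.
by case: b => /=; case: (l == t); rewrite /= -/(level_of _ t) IHc ?pmul1P.
Qed.

End MeasPower.

Section OutcomeFaults.
Variables (C : numClosedFieldType) (n : nat) (c : circuit n C) (u : outcomes c).
Local Notation us := [seq u j | j <- enum 'I_(nmeas c)].

Lemma outcome_level_paulis t :
  [seq measP c (val j) | j <- [seq j <- enum 'I_(nmeas c) | u j && (measL c j == t)]]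
  = [seq m.1.2 | m <- mask us (meas_list c) & m.2 == t].
Proof.
have -> : [seq j <- enum 'I_(nmeas c) | u j && (measL c j == t)]
          = [seq j : 'I_(nmeas c) <- mask us (enum 'I_(nmeas c)) | measL c j == t].
  rewrite mask_enum_ord -[RHS]filter_predI; apply: eq_filter => j /=.
  by rewrite andbC (nth_map j) ?size_enum_ord // nth_ord_enum.
have -> : meas_list c
          = [seq nth (false, pid n, 0%N) (meas_list c) j | j : 'I_(nmeas c) <- enum 'I_(nmeas c)].
  by rewrite -[LHS](mkseq_nth (false, pid n, 0%N)) /mkseq -val_enum_ord -map_comp.
by rewrite -map_mask filter_map -map_comp.
Qed.

Lemma Fu_level i : Fu u i = meas_pauli (level_of (meas_power c us) i.+1).
Proof. by rewrite ffunE outcome_level_paulis meas_pauli_meas_power. Qed.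

Lemma Fu'_level i : Fu' u i = meas_pauli (level_of (meas_power c us) i).
Proof. by rewrite ffunE outcome_level_paulis meas_pauli_meas_power. Qed.

End OutcomeFaults.

Section WellFormed.
Variables (C : numClosedFieldType) (n : nat).
Implicit Types (c : circuit n C).

Lemma Ulev_circ_mx c t : Ulev c t = circ_mx gate_mx (level_of c t).
Proof.
rewrite /Ulev -[RHS]mulmx1; elim: c 1%:M => [|[[U|s P] l] c IHc] A /=; first by rewrite mul1mx.
  by rewrite IHc /level_of /=; case: (l == t); rewrite //= mulmxA.
by rewrite IHc /level_of /=; case: (l == t); rewrite //= mulmx1.
Qed.

Lemma levels_le_depth c : all (fun x => x.2 <= depth c)%N c.
Proof.
rewrite /depth; elim: c => //= x c IHc; rewrite big_cons leq_maxl.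
by apply: sub_all IHc => y /= le_y; apply: leq_trans le_y (leq_maxr _ _).
Qed.

Lemma well_formed_disjoint c : well_formed c -> pairwise same_level_disjoint c.
Proof.
case/and4P => _ _ _ /forallP disj.
apply/(pairwiseP (Meas false (pid n), 0%N)) => i j lt_i lt_j lt_ij.
by have := forallP (disj (Ordinal lt_i)) (Ordinal lt_j); rewrite /= lt_ij.
Qed.

End WellFormed.

Theorem mainTheorem16 (C : numClosedFieldType) (n : nat) (c : circuit n C) :
  well_formed c ->
  linear_code (@outcome_code C n c) ->
  forall u : outcomes c, in_perp (@outcome_code C n c) u ->
  back_cumulant (@Fu n C c u) = cumulant (@Fu' n C c u).
Proof.
move=> wf_c _ u perp_u; have [pos_c sorted_c cliff_c _] := and4P wf_c.
set d := meas_power c [seq u j | j <- enum 'I_(nmeas c)].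
have levels_d : [seq x.2 | x <- d] = [seq x.2 | x <- c] := meas_power_levels _ _.
apply: (@back_cumulant_eq_cumulant C n c d).
- by rewrite /level_le -sorted_map levels_d.
- by rewrite -(all_map snd (fun l => 0 < l)%N) levels_d all_map.
- by rewrite -(all_map snd (fun l => l <= depth c)%N) levels_d all_map levels_le_depth.
- exact: meas_power_all.
- exact/meas_power_disjoint/well_formed_disjoint.
- by move=> t; rewrite Ulev_circ_mx gates_meas_power_level.
- exact: Fu_level.
- exact: Fu'_level.
- by rewrite circ_mx_perp // gates_meas_power.
Qed.
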